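(* Let $\Omega:\mathbb{Z}[VB_n]\to\mathbb{Z}[VP_n]\otimes\mathbb{Z}[S_n]$ be the $\mathbb{Z}$-linear map defined on group elements by $\Omega(v)=v\,\big(s(\nu(v))\big)^{-1}\otimes\nu(v)$; it is an isomorphism of $\mathbb{Z}$-algebras, where $\mathbb{Z}[VP_n]\otimes\mathbb{Z}[S_n]$ carries the algebra structure of $\mathbb{Z}[VP_n\rtimes S_n]$. Let $J$ be the two-sided ideal of $\mathbb{Z}[VB_n]$ generated by $\{\sigma_i-\rho_i \mid i=1,\dots,n-1\}$. Then for every integer $d\geq 1$, $\Omega$ maps $J^d$ isomorphically onto $I^d(VP_n)\otimes\mathbb{Z}[S_n]$.
   Context: The virtual braid group $VB_n$ is the group with generators $\sigma_i,\rho_i$ ($i=1,\dots,n-1$) and defining relations: $\sigma_i\sigma_{i+1}\sigma_i=\sigma_{i+1}\sigma_i\sigma_{i+1}$ ($1\le i\le n-2$); $\sigma_i\sigma_j=\sigma_j\sigma_i$ ($|i-j|\geq 2$); $\rho_i\rho_{i+1}\rho_i=\rho_{i+1}\rho_i\rho_{i+1}$ ($1\le i\le n-2$); $\rho_i\rho_j=\rho_j\rho_i$ ($|i-j|\geq 2$); $\rho_i^2=1$; $\sigma_i\rho_j=\rho_j\sigma_i$ ($|i-j|\geq2$); $\rho_i\rho_{i+1}\sigma_i=\sigma_{i+1}\rho_i\rho_{i+1}$ ($1\le i\le n-2$). $\nu:VB_n\to S_n$ is the homomorphism $\nu(\sigma_i)=\nu(\rho_i)=(i\ i{+}1)$, $VP_n=\ker\nu$,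 and $s:S_n\to VB_n$ is the homomorphic section $s((i\ i{+}1))=\rho_i$, so that $VB_n\cong VP_n\rtimes S_n$ via $v\mapsto(v\,(s(\nu(v)))^{-1},\nu(v))$. $I(VP_n)$ denotes the augmentation ideal of $\mathbb{Z}[VP_n]$ (the two-sided ideal generated by $\{g-1\mid g\in VP_n\}$), and $I^d(VP_n)$, $J^d$ denote $d$-th powers of ideals. *)

(* Group rings of (possibly infinite) groups are modelled by
   formal finite sums (lists of (coefficient, element) pairs) compared through
   their coefficient functions [fs]. *)
From HB Require Import structures.
From mathcomp Require Import all_boot all_order all_algebra all_fingroup.
Set Implicit Arguments. Unset Strict Implicit. Unset Printing Implicit Defensive.
Import GRing.Theory.
Local Open Scope ring_scope.

Definition is_group (T : Type) (m : T -> T -> T) (iv : T -> T) (e : T) : Prop :=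
  [/\ (forall x y z, m x (m y z) = m (m x y) z),
      (forall x, m e x = x), (forall x, m x e = x),
      (forall x, m (iv x) x = e) & (forall x, m x (iv x) = e)].

Definition is_hom (T U : Type) (mT : T -> T -> T) (mU : U -> U -> U) (f : T -> U) :=
  forall x y, f (mT x y) = mU (f x) (f y).

Definition far (i j : nat) : bool := (i.+2 <= j)%N || (j.+2 <= i)%N.

Definition vb_rels (n : nat) (T : Type) (m : T -> T -> T) (e : T)
    (sg rh : nat -> T) : Prop :=
  (forall i, (1 <= i <= n - 2)%N ->
          m (m (sg i) (sg i.+1)) (sg i) = m (m (sg i.+1) (sg i)) (sg i.+1)) /\
      (forall i j, (1 <= i <= n - 1)%N -> (1 <= j <= n - 1)%N -> far i j ->
          m (sg i) (sg j) = m (sg j) (sg i)) /\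
      (forall i, (1 <= i <= n - 2)%N ->
          m (m (rh i) (rh i.+1)) (rh i) = m (m (rh i.+1) (rh i)) (rh i.+1)) /\
      (forall i j, (1 <= i <= n - 1)%N -> (1 <= j <= n - 1)%N -> far i j ->
          m (rh i) (rh j) = m (rh j) (rh i)) /\
      (forall i, (1 <= i <= n - 1)%N -> m (rh i) (rh i) = e) /\
      (forall i j, (1 <= i <= n - 1)%N -> (1 <= j <= n - 1)%N -> far i j ->
          m (sg i) (rh j) = m (rh j) (sg i)) /\
      (forall i, (1 <= i <= n - 2)%N ->
          m (m (rh i) (rh i.+1)) (sg i) = m (sg i.+1) (m (rh i) (rh i.+1))).

(* words in the generators: (inverted?, is_rho?, index) *)
Definition eval_word (T : Type) (m : T -> T -> T) (iv : T -> T) (e : T)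
    (sg rh : nat -> T) (w : seq (bool * bool * nat)) : T :=
  foldr (fun l acc =>
           let g := if l.1.2 then rh l.2 else sg l.2 in
           m (if l.1.1 then iv g else g) acc) e w.

Definition presents_VB (n : nat) (G : Type) (m : G -> G -> G) (iv : G -> G) (e : G)
    (sg rh : nat -> G) : Prop :=
  [/\ vb_rels n m e sg rh,
      (forall g, exists w : seq (bool * bool * nat),
          all (fun l => (1 <= l.2 <= n - 1)%N) w /\ g = eval_word m iv e sg rh w) &
      (forall (K : Type) (mK : K -> K -> K) (iK : K -> K) (eK : K),
          is_group mK iK eK -> forall sK rK : nat -> K, vb_rels n mK eK sK rK ->
          exists f : G -> K, is_hom m mK f /\
            (forall i, (1 <= i <= n - 1)%N -> f (sg i) = sK i /\ f (rh i) = rK i))].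

(* the transposition (i i+1) of {1..n}, i.e. tperm (i-1) i on 'I_n (0-based) *)
Definition str (n i : nat) : 'S_n :=
  match @insub _ (fun k => (k < n)%N) 'I_n i.-1, @insub _ (fun k => (k < n)%N) 'I_n i with
  | Some a, Some b => tperm a b
  | _, _ => 1%g
  end.

Definition fsum (T : Type) := seq (int * T).

Definition fs (T : eqType) (l : fsum T) : T -> int :=
  fun g => \sum_(p <- l | p.2 == g) p.1.

Definition negL (T : Type) (l : fsum T) : fsum T := [seq (- p.1, p.2) | p <- l].

Definition mulL (T : Type) (m : T -> T -> T) (a b : fsum T) : fsum T :=
  [seq (p.1 * q.1, m p.2 q.2) | p <- a, q <- b].

Inductive zspan (T : eqType) (S : fsum T -> Prop) : fsum T -> Prop :=
  | zs_gen a : S a -> zspan S a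
  | zs_nil : zspan S [::]
  | zs_add a b : zspan S a -> zspan S b -> zspan S (a ++ b)
  | zs_neg a : zspan S a -> zspan S (negL a)
  | zs_ext a b : fs a = fs b -> zspan S a -> zspan S b.

Definition supp_in (T : Type) (H : pred T) (x : fsum T) : bool :=
  all (fun p => H p.2) x.

Definition ideal_gen (T : eqType) (m : T -> T -> T) (H : pred T)
    (S : fsum T -> Prop) : fsum T -> Prop :=
  zspan (fun l => exists x a y, [/\ supp_in H x, S a, supp_in H y &
                                   l = mulL m x (mulL m a y)]).

Definition ideal_mul (T : eqType) (m : T -> T -> T) (I K : fsum T -> Prop) :=
  zspan (fun l => exists a b, [/\ I a, K b & l = mulL m a b]).

(* ideal power I^d for d >= 1 (the value at d = 0 is a dummy, equal to I) *)
Fixpoint ideal_pow (T : eqType) (m : T -> T -> T) (I : fsum T -> Prop) (d : nat)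
  : fsum T -> Prop :=
  match d with
  | 0 | 1 => I
  | d'.+1 => ideal_mul m (ideal_pow m I d') I
  end.

(* Z[A] (x) Z[B] realised as Z[A * B]; tensor of formal sums *)
Definition tens (A B : Type) (a : fsum A) (b : fsum B) : fsum (A * B) :=
  [seq (p.1 * q.1, (p.2, q.2)) | p <- a, q <- b].

Definition tens_ideal (A B : eqType) (I : fsum A -> Prop) : fsum (A * B) -> Prop :=
  zspan (fun l => exists a (z : fsum B), I a /\ l = tens a z).

Definition Jideal (n : nat) (G : eqType) (m : G -> G -> G) (sg rh : nat -> G) :=
  ideal_gen m predT
    (fun l => exists i, (1 <= i <= n - 1)%N /\ l = [:: (1%:Z, sg i); (-1, rh i)]).

(* augmentation ideal I(VP_n) of Z[VP_n], VP_n = ker nu *)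
Definition aug_VP (n : nat) (G : eqType) (m : G -> G -> G) (e : G) (nu : G -> 'S_n) :=
  ideal_gen m (fun g => nu g == 1%g)
    (fun l => exists g, nu g = 1%g /\ l = [:: (1%:Z, g); (-1, e)]).

Definition Omega (n : nat) (G : Type) (m : G -> G -> G) (iv : G -> G)
    (nu : G -> 'S_n) (s : 'S_n -> G) (l : fsum G) : fsum (G * 'S_n) :=
  [seq (p.1, (m p.2 (iv (s (nu p.2))), nu p.2)) | p <- l].

From HB Require Import structures.
From mathcomp Require Import all_boot all_order all_algebra all_fingroup.
From mathcomp Require Import ring zify.
From Stdlib Require Import FunctionalExtensionality.
Set Implicit Arguments. Unset Strict Implicit. Unset Printing Implicit Defensive.
Import GRing.Theory.
Local Open Scope ring_scope.

(* Let K = ker nu and I = I(K).  For every g, g - s(nu g) lies in J: it is sigma_i - rho_i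
   or 0 on the generators, and g h - s(nu (g h)) = g (h - s(nu h)) + (g - s(nu g)) s(nu h).
   For g in K it reads g - 1, so I <= J, I^d <= J^d, and I^d Z[G] <= J^d.
   Conversely sigma_i - rho_i = (sigma_i rho_i^-1 - 1) rho_i with sigma_i rho_i^-1 in K,
   and I^d Z[G] is a two-sided ideal with (I^d Z[G]) (I Z[G]) <= I^(d+1) Z[G], because
   I^d is stable under conjugation by G; hence J^d = I^d Z[G].  On it, Omega sends
   a h (a in I^d, supported on K) to (a t) (x) nu h with t = h s(nu h)^-1 in K, and
   a s(z) to a (x) z, while (v, p) |-> v s(p) inverts Omega. *)

Section FormalSums.
Variable T : Type.
Implicit Types (a b : fsum T) (c : T -> int).

Definition ev c a : int := \sum_(p <- a) p.1 * c p.2.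

Definition fsmap (U : Type) (f : T -> U) a : fsum U := [seq (p.1, f p.2) | p <- a].

Lemma ev_nil c : ev c [::] = 0.
Proof. by rewrite /ev big_nil. Qed.

Lemma ev_cons c p a : ev c (p :: a) = p.1 * c p.2 + ev c a.
Proof. by rewrite /ev big_cons. Qed.

Lemma ev_cat c a b : ev c (a ++ b) = ev c a + ev c b.
Proof. by rewrite /ev big_cat. Qed.

Lemma ev_negL c a : ev c (negL a) = - ev c a.
Proof. by rewrite /ev big_map -sumrN; apply: eq_bigr => p _; rewrite mulNr. Qed.

Lemma eq_ev c c' a : c =1 c' -> ev c a = ev c' a.
Proof. by move=> E; apply: eq_bigr => p _; rewrite E. Qed.

Lemma ev_scale k c a : ev (fun g => k * c g) a = k * ev c a.
Proof. by rewrite /ev mulr_sumr; apply: eq_bigr => p _; rewrite mulrCA. Qed.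

Lemma fsmap_id_in (f : T -> T) a : f =1 id -> fsmap f a = a.
Proof. by move=> fE; rewrite /fsmap -[RHS]map_id; apply: eq_map => -[k g] /=; rewrite fE. Qed.

Lemma ev_mulL (m : T -> T -> T) c a b :
  ev c (mulL m a b) = ev (fun g => ev (fun h => c (m g h)) b) a.
Proof.
elim: a => [|p a IH]; first by rewrite !ev_nil.
rewrite /= ev_cat IH ev_cons /ev big_map mulr_sumr; congr (_ + _).
by apply: eq_bigr => q _; rewrite mulrA.
Qed.

Lemma fsmap_mulL (m : T -> T -> T) (f : T -> T) a b :
  is_hom m m f -> fsmap f (mulL m a b) = mulL m (fsmap f a) (fsmap f b).
Proof.
move=> fM; elim: a => [|p a IH] //; rewrite /fsmap /= map_cat; congr (_ ++ _) => //.
by rewrite -!map_comp; apply: eq_map => q /=; rewrite fM.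
Qed.

End FormalSums.

Lemma ev_fsmap (T U : Type) (f : T -> U) (c : U -> int) (a : fsum T) :
  ev c (fsmap f a) = ev (c \o f) a.
Proof. by rewrite /ev big_map. Qed.

Lemma fsmap_comp (T U V : Type) (f : U -> V) (g : T -> U) (a : fsum T) :
  fsmap f (fsmap g a) = fsmap (f \o g) a.
Proof. by rewrite /fsmap -map_comp. Qed.

Lemma ev_exchange (T T' : Type) (F : T -> T' -> int) (a : fsum T) (b : fsum T') :
  ev (fun g => ev (F g) b) a = ev (fun h => ev (F^~ h) a) b.
Proof.
rewrite /ev; under eq_bigr do rewrite mulr_sumr.
rewrite exchange_big; apply: eq_bigr => q _; rewrite mulr_sumr.
by apply: eq_bigr => p _; rewrite mulrCA.
Qed.

Lemma ev_tens (A B : Type) (c : A * B -> int) (a : fsum A) (b : fsum B) :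
  ev c (tens a b) = ev (fun g => ev (fun h => c (g, h)) b) a.
Proof.
elim: a => [|p a IH]; first by rewrite !ev_nil.
rewrite /= ev_cat IH ev_cons /ev big_map mulr_sumr; congr (_ + _).
by apply: eq_bigr => q _; rewrite mulrA.
Qed.

Ltac evsimp :=
  do 6 (rewrite ?ev_cat ?ev_mulL ?ev_cons ?ev_nil ?ev_negL ?ev_tens ?ev_fsmap /=).

Section CoefficientFunctions.
Variable T : eqType.
Implicit Types (a b : fsum T) (c : T -> int).

Lemma fsE a g : fs a g = ev (fun h => (h == g)%:R) a.
Proof.
rewrite /fs /ev big_mkcond; apply: eq_bigr => p _.
by case: eqP => _; rewrite ?mulr1 ?mulr0.
Qed.

Lemma ev_coef (U : seq T) a c :
  uniq U -> {subset map snd a <= U} -> ev c a = \sum_(g <- U) fs a g * c g.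
Proof.
move=> uU; elim: a => [|p a IH] sub.
  by rewrite ev_nil big1 // => g _; rewrite /fs big_nil mul0r.
rewrite ev_cons IH; last by move=> x xa; apply: sub; rewrite /= inE xa orbT.
have pU : p.2 \in U by apply: sub; rewrite /= inE eqxx.
have E g : fs (p :: a) g * c g = p.1 * ((p.2 == g)%:R * c g) + fs a g * c g.
  by rewrite !fsE ev_cons mulrDl mulrA.
rewrite (eq_bigr _ (fun g _ => E g)) big_split /= -mulr_sumr; congr (_ * _ + _).
rewrite (bigD1_seq p.2) //= eqxx mul1r big1 ?addr0 // => g /negbTE ne.
by rewrite eq_sym ne mul0r.
Qed.

Lemma fs_evP a b : fs a = fs b <-> forall c, ev c a = ev c b.
Proof.
split=> [E c | E]; last by apply: functional_extensionality => g; rewrite !fsE E.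
have uU := undup_uniq (map snd (a ++ b)).
by rewrite !(ev_coef c uU) ?E // => g ga; rewrite mem_undup map_cat mem_cat ga ?orbT.
Qed.

End CoefficientFunctions.

Lemma fs_fsmap (T U : eqType) (f : T -> U) (a b : fsum T) :
  fs a = fs b -> fs (fsmap f a) = fs (fsmap f b).
Proof. by move=> /fs_evP E; apply/fs_evP => c; rewrite !ev_fsmap E. Qed.

Section Zspan.
Variable T : eqType.
Implicit Types (S : fsum T -> Prop) (a b x : fsum T).

(* [F] is Z-linear and respects [fs], being the transpose of [Phi] on test functions. *)
Lemma zspan_map (U : eqType) S (S' : fsum U -> Prop) (F : fsum T -> fsum U)
    (Phi : (U -> int) -> T -> int) :
  (forall c a, ev c (F a) = ev (Phi c) a) -> (forall a, S a -> zspan S' (F a)) ->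
  forall x, zspan S x -> zspan S' (F x).
Proof.
move=> FE FS x; elim=> {x} [a /FS // | | a b _ IHa _ IHb | a _ IH | a b E _ IH].
- by apply: zs_ext (zs_nil _); apply/fs_evP => c; rewrite FE !ev_nil.
- by apply: zs_ext (zs_add IHa IHb); apply/fs_evP => c; rewrite FE !ev_cat !FE.
- by apply: zs_ext (zs_neg IH); apply/fs_evP => c; rewrite FE !ev_negL !FE.
- by apply: zs_ext IH; apply/fs_evP => c; rewrite !FE; apply: (proj1 (fs_evP _ _) E).
Qed.

Lemma zspan_onto (U : eqType) S (S' : fsum U -> Prop) (F : fsum T -> fsum U)
    (Phi : (U -> int) -> T -> int) :
  (forall c a, ev c (F a) = ev (Phi c) a) ->
  (forall u, S' u -> exists a, zspan S a /\ fs (F a) = fs u) ->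
  forall y, zspan S' y -> exists x, zspan S x /\ fs (F x) = fs y.
Proof.
move=> FE FS y; elim=> {y} [y /FS // | | y1 y2 _ [a [Sa /fs_evP Ea]] _ [a' [Sa' /fs_evP Ea']]
  | y1 _ [a [Sa /fs_evP Ea]] | y1 y2 E _ [a [Sa Ea]]].
- by exists [::]; split; [exact: zs_nil | apply/fs_evP => c; rewrite FE !ev_nil].
- exists (a ++ a'); split; first exact: zs_add.
  by apply/fs_evP => c; rewrite FE !ev_cat -!FE Ea Ea'.
- exists (negL a); split; first exact: zs_neg.
  by apply/fs_evP => c; rewrite FE !ev_negL -FE Ea.
- by exists a; split; rewrite // Ea.
Qed.

Lemma zspan_mono S S' : (forall a, S a -> zspan S' a) -> forall x, zspan S x -> zspan S' x.
Proof. exact: (@zspan_map _ S S' id id). Qed.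

Definition monomial (l : fsum T) : Prop := exists k g, l = [:: (k, g)].

Lemma zspan_monomial x : zspan monomial x.
Proof.
elim: x => [|[k g] x IH]; first exact: zs_nil.
by apply: (zs_add (a := [:: (k, g)])) => //; apply: zs_gen; exists k, g.
Qed.

Lemma zspan_mulL (m : T -> T -> T) S1 S2 S3 x y :
  (forall a b, S1 a -> S2 b -> zspan S3 (mulL m a b)) ->
  zspan S1 x -> zspan S2 y -> zspan S3 (mulL m x y).
Proof.
move=> S12 Sx Sy; move: x Sx.
apply: (zspan_map (Phi := fun c g => ev (fun h => c (m g h)) y)) => [c a|a Sa].
  exact: ev_mulL.
move: y Sy; apply: (zspan_map (Phi := fun c h => ev (fun g => c (m g h)) a)) => [c b|b Sb].
  by rewrite ev_mulL ev_exchange.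
exact: S12.
Qed.

End Zspan.

Section Ideals.
Variables (T : eqType) (m : T -> T -> T).
Implicit Types (S I : fsum T -> Prop) (a b w x : fsum T) (H : pred T).

Lemma fs_mulL a a' b b' : fs a = fs a' -> fs b = fs b' -> fs (mulL m a b) = fs (mulL m a' b').
Proof.
move=> /fs_evP Ea /fs_evP Eb; apply/fs_evP => c.
by rewrite !ev_mulL Ea; apply: eq_ev => g; apply: Eb.
Qed.

Lemma mulL_cons p a b :
  mulL m (p :: a) b = [seq (p.1 * q.1, m p.2 q.2) | q <- b] ++ mulL m a b.
Proof. by []. Qed.

Lemma mulL1r a h : mulL m a [:: (1, h)] = fsmap (m^~ h) a.
Proof. by elim: a => [|p a IH] //; rewrite mulL_cons IH /= mulr1. Qed.

Lemma mulL1l a g : mulL m [:: (1, g)] a = fsmap (m g) a.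
Proof. by rewrite mulL_cons /= cats0; apply: eq_map => p; rewrite mul1r. Qed.

Lemma supp_predT a : supp_in predT a.
Proof. by elim: a. Qed.

Lemma supp_fsmap H (f : T -> T) a :
  {homo f : g / H g} -> supp_in H a -> supp_in H (fsmap f a).
Proof. by move=> fH; rewrite /supp_in all_map => /allP Ha; apply/allP => p /Ha /fH. Qed.

Lemma ideal_pow_zspan S d : exists S', ideal_pow m (zspan S) d = zspan S'.
Proof. by case: d => [|[|d]]; eexists. Qed.

Lemma ideal_pow_mono I I' d x :
  (forall a, I a -> I' a) -> ideal_pow m I d x -> ideal_pow m I' d x.
Proof.
move=> II'; elim: d x => [|[|d] IH] x; try exact: II'.
apply: zspan_mono => _ [a [b [Ia Ib ->]]]; apply: zs_gen.
by exists a, b; split; [apply: IH | apply: II' |].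
Qed.

Lemma ideal_pow_fsmap I (f : T -> T) d x :
  is_hom m m f -> (forall a, I a -> I (fsmap f a)) ->
  ideal_pow m I d x -> ideal_pow m I d (fsmap f x).
Proof.
move=> fM fI; elim: d x => [|[|d] IH] x; try exact: fI.
apply: (zspan_map (Phi := fun c => c \o f)) => [c a|_ [a [b [Ia Ib ->]]]].
  exact: ev_fsmap.
rewrite fsmap_mulL //; apply: zs_gen.
by exists (fsmap f a), (fsmap f b); split; [apply: IH | apply: fI |].
Qed.

Definition in_group_ring H a : Prop :=
  forall c c', (forall g, H g -> c g = c' g) -> ev c a = ev c' a.

Lemma supp_in_group_ring H a : supp_in H a -> in_group_ring H a.
Proof.
move=> Ha c c' cc'; elim: a Ha => [|p a IH] /=; first by rewrite !ev_nil.
by case/andP=> Hp Ha; rewrite !ev_cons cc' // IH.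
Qed.

Lemma zspan_in_group_ring H S x :
  (forall a, S a -> in_group_ring H a) -> zspan S x -> in_group_ring H x.
Proof.
move=> SH; elim=> {x} [a /SH // | | a b _ IHa _ IHb | a _ IH | a b E _ IH] c c' cc'.
- by rewrite !ev_nil.
- by rewrite !ev_cat (IHa c c') // (IHb c c').
- by rewrite !ev_negL (IH c c').
- by rewrite -!(proj1 (fs_evP _ _) E) (IH c c').
Qed.

Lemma ideal_gen_fsmap H S (f : T -> T) x :
  is_hom m m f -> {homo f : g / H g} -> (forall a, S a -> S (fsmap f a)) ->
  ideal_gen m H S x -> ideal_gen m H S (fsmap f x).
Proof.
move=> fM fH fS; move: x; apply: (zspan_map (Phi := fun c => c \o f)) => [c a|].
  exact: ev_fsmap.
move=> _ [x0 [a [y0 [Hx Sa Hy ->]]]]; rewrite !fsmap_mulL //; apply: zs_gen.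
exists (fsmap f x0), (fsmap f a), (fsmap f y0).
by split; [apply: supp_fsmap | apply: fS | apply: supp_fsmap |].
Qed.

Hypothesis mulA : forall g h k, m g (m h k) = m (m g h) k.

Lemma fs_mulLA a b w : fs (mulL m (mulL m a b) w) = fs (mulL m a (mulL m b w)).
Proof.
apply/fs_evP => c; rewrite !ev_mulL; apply: eq_ev => g /=; rewrite ev_mulL.
by apply: eq_ev => h; apply: eq_ev => k /=; rewrite mulA.
Qed.

Lemma ideal_pow_mulr I w d x :
  (forall a, I a -> I (mulL m a w)) -> ideal_pow m I d x -> ideal_pow m I d (mulL m x w).
Proof.
move=> Iw; case: d => [|[|d]]; try exact: Iw; move: x.
apply: (zspan_map (Phi := fun c g => ev (fun h => c (m g h)) w)) => [c a|_ [a [b [Ia Ib ->]]]].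
  exact: ev_mulL.
have gen : ideal_pow m I d.+2 (mulL m a (mulL m b w)).
  by apply: zs_gen; exists a, (mulL m b w); split => //; apply: Iw.
by apply: zs_ext gen; rewrite fs_mulLA.
Qed.

Section MulClosed.
Variable H : pred T.
Hypothesis mulH : forall g h, H g -> H h -> H (m g h).

Lemma supp_mulL a b : supp_in H a -> supp_in H b -> supp_in H (mulL m a b).
Proof.
rewrite /supp_in; elim: a => [|p a IH] //= /andP[Hp Ha] Hb.
rewrite all_cat IH // andbT all_map.
by apply/allP => q qb /=; apply: mulH => //; apply: (allP Hb).
Qed.

Lemma in_group_ring_mulL a b :
  in_group_ring H a -> in_group_ring H b -> in_group_ring H (mulL m a b).
Proof.
move=> Ha Hb c c' cc'; rewrite !ev_mulL; apply: Ha => g Hg.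
by apply: Hb => h Hh; apply: cc'; apply: mulH.
Qed.

Lemma ideal_gen_in_group_ring S x :
  (forall a, S a -> in_group_ring H a) -> ideal_gen m H S x -> in_group_ring H x.
Proof.
move=> SH; apply: zspan_in_group_ring => _ [x0 [a [y0 [Hx Sa Hy ->]]]].
exact: in_group_ring_mulL (supp_in_group_ring Hx)
  (in_group_ring_mulL (SH _ Sa) (supp_in_group_ring Hy)).
Qed.

Lemma ideal_pow_in_group_ring I d x :
  (forall a, I a -> in_group_ring H a) -> ideal_pow m I d x -> in_group_ring H x.
Proof.
move=> IH; elim: d x => [|[|d] IHd] x; try exact: IH.
apply: zspan_in_group_ring => _ [a [b [Ia Ib ->]]].
by apply: in_group_ring_mulL; [apply: IHd | apply: IH].
Qed.

Lemma ideal_gen_mulr S w x :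
  supp_in H w -> ideal_gen m H S x -> ideal_gen m H S (mulL m x w).
Proof.
move=> Hw; move: x.
apply: (zspan_map (Phi := fun c g => ev (fun h => c (m g h)) w)) => [c a|].
  exact: ev_mulL.
move=> _ [x0 [a [y0 [Hx Sa Hy ->]]]].
have gen : ideal_gen m H S (mulL m x0 (mulL m a (mulL m y0 w))).
  by apply: zs_gen; exists x0, a, (mulL m y0 w); split => //; apply: supp_mulL.
by apply: zs_ext gen; rewrite fs_mulLA; apply: fs_mulL => //; rewrite fs_mulLA.
Qed.

Lemma ideal_gen_mull S w x :
  supp_in H w -> ideal_gen m H S x -> ideal_gen m H S (mulL m w x).
Proof.
move=> Hw; move: x.
apply: (zspan_map (Phi := fun c h => ev (fun g => c (m g h)) w)) => [c a|].
  by rewrite ev_mulL ev_exchange.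
move=> _ [x0 [a [y0 [Hx Sa Hy ->]]]].
have gen : ideal_gen m H S (mulL m (mulL m w x0) (mulL m a y0)).
  by apply: zs_gen; exists (mulL m w x0), a, y0; split => //; apply: supp_mulL.
by apply: zs_ext gen; rewrite fs_mulLA.
Qed.

Lemma ideal_gen_sub S e a :
  (forall g, m e g = g) -> (forall g, m g e = g) -> H e -> S a -> ideal_gen m H S a.
Proof.
move=> e1 e2 He Sa; have E : mulL m [:: (1, e)] (mulL m a [:: (1, e)]) = a.
  by rewrite mulL1l mulL1r fsmap_comp fsmap_id_in // => g /=; rewrite e1 e2.
by rewrite -E; apply: zs_gen; exists [:: (1, e)], a, [:: (1, e)]; split; rewrite // /supp_in /= He.
Qed.

End MulClosed.
End Ideals.

Section GroupLaws.
Variables (T : Type) (m : T -> T -> T) (iv : T -> T) (e : T).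
Hypothesis Tgrp : is_group m iv e.

Lemma group_mulA x y z : m x (m y z) = m (m x y) z. Proof. by case: Tgrp. Qed.
Lemma group_mul1m x : m e x = x. Proof. by case: Tgrp. Qed.
Lemma group_mulm1 x : m x e = x. Proof. by case: Tgrp. Qed.
Lemma group_mulVm x : m (iv x) x = e. Proof. by case: Tgrp. Qed.
Lemma group_mulmV x : m x (iv x) = e. Proof. by case: Tgrp. Qed.

Lemma group_conjM g : is_hom m m (fun x => m (m g x) (iv g)).
Proof.
move=> x y; rewrite !group_mulA -[m (m (m g x) (iv g)) g]group_mulA group_mulVm.
by rewrite group_mulm1.
Qed.

End GroupLaws.

Section Homomorphisms.
Variables (T : Type) (m : T -> T -> T) (iv : T -> T) (e : T).
Variables (U : Type) (mU : U -> U -> U) (ivU : U -> U) (eU : U) (f : T -> U).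
Hypotheses (Tgrp : is_group m iv e) (Ugrp : is_group mU ivU eU) (fM : is_hom m mU f).

Lemma hom1 : f e = eU.
Proof.
have ff : f e = mU (f e) (f e) by rewrite -fM (group_mul1m Tgrp).
by rewrite -[f e](group_mul1m Ugrp) -(group_mulVm Ugrp (f e)) -(group_mulA Ugrp) -ff.
Qed.

Lemma homV x : f (iv x) = ivU (f x).
Proof.
rewrite -[f (iv x)](group_mulm1 Ugrp) -(group_mulmV Ugrp (f x)).
by rewrite (group_mulA Ugrp) -fM (group_mulVm Tgrp) hom1 (group_mul1m Ugrp).
Qed.

End Homomorphisms.

Lemma finGroup_is_group (gT : finGroupType) :
  is_group (fun x y : gT => (x * y)%g) (fun x : gT => x^-1)%g 1%g.
Proof. by split=> *; rewrite ?mulgA ?mul1g ?mulg1 ?mulVg ?mulgV. Qed.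

Section SemidirectDecomposition.
Variables (n : nat) (G : eqType) (m : G -> G -> G) (iv : G -> G) (e : G).
Variables (nu : G -> 'S_n) (s : 'S_n -> G).
Hypotheses (Ggrp : is_group m iv e) (nuM : is_hom m (fun p q : 'S_n => (p * q)%g) nu).

Let mulA := group_mulA Ggrp.
Let mulm1 := group_mulm1 Ggrp.
Let mulVm := group_mulVm Ggrp.
Let mulmV := group_mulmV Ggrp.

Let K : pred G := fun g => nu g == 1%g.
Local Notation I := (aug_VP m e nu).
Let cj g x := m (m g x) (iv g).

Lemma nu1 : nu e = 1%g.
Proof. exact: (hom1 Ggrp (finGroup_is_group _) nuM). Qed.

Lemma nuV g : nu (iv g) = (nu g)^-1%g.
Proof. exact: (homV Ggrp (finGroup_is_group _) nuM g). Qed.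

Lemma ker_mul g h : K g -> K h -> K (m g h).
Proof. by rewrite /K nuM => /eqP -> /eqP ->; rewrite mulg1. Qed.

Lemma ker_conj g x : K x -> K (cj g x).
Proof. by rewrite /K /cj !nuM nuV => /eqP ->; rewrite mulg1 mulgV. Qed.

Lemma cj_mul g x h : m (cj g x) (m g h) = m g (m x h).
Proof. by rewrite /cj !mulA -[m (m (m g x) (iv g)) g]mulA mulVm mulm1. Qed.

Lemma aug_in_group_ring d a : ideal_pow m I d a -> in_group_ring K a.
Proof.
apply: (ideal_pow_in_group_ring ker_mul) => x.
apply: (ideal_gen_in_group_ring ker_mul) => _ [g [Kg ->]].
by apply: supp_in_group_ring; rewrite /supp_in /= /K Kg nu1 eqxx.
Qed.

Lemma aug_conj d g a : ideal_pow m I d a -> ideal_pow m I d (fsmap (cj g) a).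
Proof.
apply: (ideal_pow_fsmap (group_conjM Ggrp g)) => x.
apply: (ideal_gen_fsmap (group_conjM Ggrp g) (ker_conj g)) => _ [k [Kk ->]].
exists (cj g k); split; first by apply/eqP; apply: ker_conj; apply/eqP.
by rewrite /fsmap /= /cj mulm1 mulmV.
Qed.

Lemma aug_mulr_ker d k a : K k -> ideal_pow m I d a -> ideal_pow m I d (fsmap (m^~ k) a).
Proof.
move=> Kk; rewrite -mulL1r; apply: (ideal_pow_mulr mulA) => x.
by apply: (ideal_gen_mulr mulA ker_mul); rewrite /supp_in /= Kk.
Qed.

Definition aug_ext d := ideal_mul m (ideal_pow m I d) (@monomial G).

Lemma aug_ext_gen d a k h : ideal_pow m I d a -> aug_ext d (mulL m a [:: (k, h)]).
Proof. by move=> Ia; apply: zs_gen; exists a, [:: (k, h)]; split => //; exists k, h. Qed.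

Lemma fs_monomial_conj a k g k' h :
  fs (mulL m [:: (k, g)] (mulL m a [:: (k', h)])) =
  fs (mulL m (fsmap (cj g) a) [:: (k * k', m g h)]).
Proof.
apply/fs_evP => c; rewrite !ev_mulL ev_fsmap ev_cons ev_nil addr0 /= ev_mulL -ev_scale.
by apply: eq_ev => v /=; rewrite !ev_cons !ev_nil /= cj_mul; ring.
Qed.

Lemma aug_ext_mulr d x w : aug_ext d x -> aug_ext d (mulL m x w).
Proof.
move=> Ix; apply: zspan_mulL Ix (zspan_monomial w).
move=> _ _ [a [_ [Ia [k [h ->]] ->]]] [k' [h' ->]].
by apply: zs_ext (aug_ext_gen (k * k') (m h h') Ia); rewrite (fs_mulLA mulA).
Qed.

Lemma aug_ext_mull d w x : aug_ext d x -> aug_ext d (mulL m w x).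
Proof.
apply: zspan_mulL (zspan_monomial w) => _ _ [k [g ->]] [a [_ [Ia [k' [h ->]] ->]]].
by apply: zs_ext (aug_ext_gen (k * k') (m g h) (aug_conj g Ia)); rewrite fs_monomial_conj.
Qed.

Lemma aug_ext_mul d x y : aug_ext d.+1 x -> aug_ext 1 y -> aug_ext d.+2 (mulL m x y).
Proof.
apply: zspan_mulL => _ _ [a [_ [Ia [k [g ->]] ->]]] [b [_ [Ib [k' [h ->]] ->]]].
have Iab : ideal_pow m I d.+2 (mulL m a (fsmap (cj g) b)).
  by apply: zs_gen; exists a, (fsmap (cj g) b); split => //; apply: (aug_conj g Ib).
apply: zs_ext (aug_ext_gen (k * k') (m g h) Iab).
by rewrite !(fs_mulLA mulA); apply: fs_mulL => //; rewrite fs_monomial_conj.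
Qed.

Let omega v := (m v (iv (s (nu v))), nu v).

Lemma OmegaE x : Omega m iv nu s x = fsmap omega x.
Proof. by []. Qed.

Hypothesis nusK : cancel s nu.

Lemma Omega_aug_ext d x :
  aug_ext d x -> tens_ideal (ideal_pow m I d) (Omega m iv nu s x).
Proof.
apply: (zspan_map (Phi := fun c => c \o omega)) => [c a|]; first exact: ev_fsmap.
move=> _ [a [_ [Ia [k [h ->]] ->]]].
pose t := m h (iv (s (nu h))).
(* for v in ker nu, Omega (v h) = (v t, nu h) *)
have Kt : K t by rewrite /K /t nuM nuV nusK mulgV.
have Ita : tens_ideal (ideal_pow m I d) (tens (fsmap (m^~ t) a) [:: (k, nu h)]).
  by apply: zs_gen; exists (fsmap (m^~ t) a), [:: (k, nu h)]; split => //; apply: aug_mulr_ker.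
apply: zs_ext Ita; apply/fs_evP => c; rewrite ev_tens OmegaE !ev_fsmap ev_mulL.
apply: (aug_in_group_ring Ia) => v /eqP Kv /=.
by rewrite !ev_cons !ev_nil /= /omega nuM Kv mul1g /t mulA.
Qed.

Lemma Omega_onto d S :
  (forall a w, ideal_pow m I d a -> ideal_pow m (zspan S) d (mulL m a w)) ->
  forall y, tens_ideal (ideal_pow m I d) y ->
  exists x, ideal_pow m (zspan S) d x /\ fs (Omega m iv nu s x) = fs y.
Proof.
have [S' ->] := ideal_pow_zspan m S d; move=> IS.
apply: (zspan_onto (Phi := fun c => c \o omega)) => [c a|]; first exact: ev_fsmap.
move=> _ [a [z [Ia ->]]]; exists (mulL m a (fsmap s z)); split; first exact: IS.
apply/fs_evP => c; rewrite OmegaE ev_fsmap ev_mulL ev_tens.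
apply: (aug_in_group_ring Ia) => v /eqP Kv /=; rewrite ev_fsmap; apply: eq_ev => q /=.
by rewrite /omega nuM nusK Kv mul1g -mulA mulmV mulm1.
Qed.

Lemma Omega_inj x x' : fs (Omega m iv nu s x) = fs (Omega m iv nu s x') -> fs x = fs x'.
Proof.
have OmegaK y : fsmap (fun p => m p.1 (s p.2)) (Omega m iv nu s y) = y.
  by rewrite OmegaE fsmap_comp fsmap_id_in // => v /=; rewrite -mulA mulVm mulm1.
by move=> /(fs_fsmap (fun p => m p.1 (s p.2))); rewrite !OmegaK.
Qed.

End SemidirectDecomposition.

Lemma str_tperm n (x y : 'I_n) : val y = (val x).+1 -> str n y = tperm x y.
Proof.
move=> yE; rewrite /str yE /=.
case: insubP => [a _ aE|]; last by rewrite ltn_ord.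
case: insubP => [b _ bE|]; last by rewrite -yE ltn_ord.
by congr tperm; apply: val_inj; rewrite ?aE ?bE.
Qed.

Lemma perm_morph_adjacent_id n (phi : 'S_n -> 'S_n) :
  {morph phi : p q / (p * q)%g} ->
  (forall i, (1 <= i <= n - 1)%N -> phi (str n i) = str n i) -> phi =1 id.
Proof.
move=> phiM phi_str.
have phi1 : phi 1%g = 1%g by apply: (mulgI (phi 1%g)); rewrite -phiM !mulg1.
have phi_adj (x y : 'I_n) : val y = (val x).+1 -> phi (tperm x y) = tperm x y.
  by move=> yE; rewrite -(str_tperm yE) phi_str //; move: (ltn_ord y); rewrite yE; lia.
have phi_far k (x y : 'I_n) : val y = (val x + k.+1)%N -> phi (tperm x y) = tperm x y.
  elim: k y => [|k IH] y yE; first by apply: phi_adj; rewrite yE addn1.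
  have zn : ((val y).-1 < n)%N := leq_ltn_trans (leq_pred _) (ltn_ord y).
  pose z := Ordinal zn.
  have zE : val z = (val x + k.+1)%N by rewrite /= yE addnS.
  have yzE : val y = (val z).+1 by rewrite zE yE; lia.
  have xz : x != z by rewrite -val_eqE zE -{1}[val x]addn0 eqn_add2l.
  have xy : x != y by rewrite -val_eqE yE -{1}[val x]addn0 eqn_add2l.
  (* conjugating (x z) by the adjacent transposition (z z+1) moves z to y = z+1 *)
  have -> : tperm x y = (tperm x z ^ tperm z y)%g.
    by rewrite tpermJ tpermL tpermD // eq_sym.
  by rewrite conjgE tpermV !phiM (IH z) // phi_adj.
have phi_tperm (x y : 'I_n) : phi (tperm x y) = tperm x y.
  have lt_tperm (u v : 'I_n) : (u < v)%N -> phi (tperm u v) = tperm u v.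
    by move=> uv; apply: (phi_far (v - u.+1)%N); rewrite -addSnnS subnKC.
  case: (ltngtP x y) => [xy|yx|/val_inj ->]; first exact: lt_tperm.
    by rewrite tpermC; apply: lt_tperm.
  by rewrite tperm1.
move=> p; have [ts -> _] := prod_tpermP p.
by elim: ts => [|t ts IH]; rewrite ?big_nil // big_cons phiM IH phi_tperm.
Qed.

Section VirtualBraidGroup.
Variables (n : nat) (G : eqType) (m : G -> G -> G) (iv : G -> G) (e : G).
Variables (sg rh : nat -> G) (nu : G -> 'S_n) (s : 'S_n -> G).
Hypotheses (Ggrp : is_group m iv e)
  (gen : forall g, exists w : seq (bool * bool * nat),
     all (fun l => (1 <= l.2 <= n - 1)%N) w /\ g = eval_word m iv e sg rh w)
  (nuM : is_hom m (fun p q : 'S_n => (p * q)%g) nu)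
  (nuE : forall i, (1 <= i <= n - 1)%N -> nu (sg i) = str n i /\ nu (rh i) = str n i)
  (sM : is_hom (fun p q : 'S_n => (p * q)%g) m s)
  (sE : forall i, (1 <= i <= n - 1)%N -> s (str n i) = rh i).

Let mulA := group_mulA Ggrp.
Let mul1m := group_mul1m Ggrp.
Let mulm1 := group_mulm1 Ggrp.
Let mulVm := group_mulVm Ggrp.
Let mulmV := group_mulmV Ggrp.

Local Notation J := (Jideal n m sg rh).

Lemma nu_sK : cancel s nu.
Proof.
apply: (perm_morph_adjacent_id (phi := nu \o s)) => [p q | i hi] /=.
  by rewrite sM nuM.
by rewrite sE // (nuE hi).2.
Qed.

Lemma s1 : s 1%g = e.
Proof. exact: (hom1 (finGroup_is_group _) Ggrp sM). Qed.

Lemma Jideal_mulr w x : J x -> J (mulL m x w).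
Proof. exact: (ideal_gen_mulr mulA (fun _ _ _ _ => isT) (supp_predT w)). Qed.

Lemma Jideal_mull w x : J x -> J (mulL m w x).
Proof. exact: (ideal_gen_mull mulA (fun _ _ _ _ => isT) (supp_predT w)). Qed.

Definition sec_diff g : fsum G := [:: (1, g); (-1, s (nu g))].

Lemma Jideal_sec_diff_mul g h : J (sec_diff g) -> J (sec_diff h) -> J (sec_diff (m g h)).
Proof.
move=> Jg Jh.
apply: zs_ext (zs_add (Jideal_mull [:: (1, g)] Jh) (Jideal_mulr [:: (1, s (nu h))] Jg)).
by apply/fs_evP => c; evsimp; rewrite nuM sM; ring.
Qed.

Lemma Jideal_sec_diff_inv g : J (sec_diff g) -> J (sec_diff (iv g)).
Proof.
move=> Jg; apply: zs_ext (Jideal_mulr [:: (1, iv (s (nu g)))] (Jideal_mull [:: (-1, iv g)] Jg)).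
apply/fs_evP => c; evsimp.
rewrite (homV Ggrp (finGroup_is_group _) nuM) (homV (finGroup_is_group _) Ggrp sM).
by rewrite mulVm mul1m -mulA mulmV mulm1; ring.
Qed.

Lemma Jideal_sec_diff_gen i :
  (1 <= i <= n - 1)%N -> J (sec_diff (sg i)) /\ J (sec_diff (rh i)).
Proof.
move=> hi; have [nu_sg nu_rh] := nuE hi; rewrite /sec_diff nu_sg nu_rh sE //; split.
  by apply: (ideal_gen_sub mul1m mulm1) => //; exists i.
have J0 : J [::] := zs_nil _.
by apply: zs_ext J0; apply/fs_evP => c; evsimp; ring.
Qed.

Lemma Jideal_sec_diff g : J (sec_diff g).
Proof.
have [w [wP ->]] := gen g; elim: w wP => [_|[[inv rho] i] w IH] /=.
  have J0 : J [::] := zs_nil _.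
  by apply: zs_ext J0; apply/fs_evP => c; evsimp; rewrite (nu1 Ggrp nuM) s1; ring.
case/andP => hi /IH Jw; apply: Jideal_sec_diff_mul Jw.
have [Jsg Jrh] := Jideal_sec_diff_gen hi.
by case: inv; case: rho => //; apply: Jideal_sec_diff_inv.
Qed.

Lemma aug_sub_Jideal x : aug_VP m e nu x -> J x.
Proof.
apply: zspan_mono => _ [x0 [a [y0 [_ [g [Kg ->]] _ ->]]]].
apply: Jideal_mull; apply: Jideal_mulr.
by have := Jideal_sec_diff g; rewrite /sec_diff Kg s1.
Qed.

Lemma Jideal_sub_aug_ext x : J x -> aug_ext m e nu 1 x.
Proof.
apply: zspan_mono => _ [x0 [a [y0 [_ [i [hi ->]] _ ->]]]].
apply: (aug_ext_mull Ggrp nuM); apply: (aug_ext_mulr Ggrp).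
pose t := m (sg i) (iv (rh i)).
have It : aug_VP m e nu [:: (1, t); (-1, e)].
  apply: (ideal_gen_sub mul1m mulm1); first by rewrite /= (nu1 Ggrp nuM).
  exists t; split => //.
  by rewrite /t nuM (nuV Ggrp nuM) (nuE hi).1 (nuE hi).2 mulgV.
apply: zs_ext (aug_ext_gen (d := 1) 1 (rh i) It).
by apply/fs_evP => c; evsimp; rewrite /t -mulA mulVm mulm1 mul1m; ring.
Qed.

Lemma Jpow_sub_aug_ext d x : ideal_pow m J d x -> aug_ext m e nu d x.
Proof.
elim: d x => [|[|d] IH] x; try exact: Jideal_sub_aug_ext.
apply: zspan_mono => _ [a [b [Ja Jb ->]]].
exact: (aug_ext_mul Ggrp nuM (IH _ Ja) (Jideal_sub_aug_ext Jb)).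
Qed.

End VirtualBraidGroup.

Unset Implicit Arguments.

Theorem proposition8p2 (n : nat) (G : eqType) (m : G -> G -> G) (iv : G -> G)
    (e : G) (sg rh : nat -> G) (nu : G -> 'S_n) (s : 'S_n -> G) :
  is_group m iv e ->
  presents_VB n m iv e sg rh ->
  is_hom m (fun p q : 'S_n => (p * q)%g) nu ->
  (forall i, (1 <= i <= n - 1)%N -> nu (sg i) = str n i /\ nu (rh i) = str n i) ->
  is_hom (fun p q : 'S_n => (p * q)%g) m s ->
  (forall i, (1 <= i <= n - 1)%N -> s (str n i) = rh i) ->
  forall d : nat, (1 <= d)%N ->
  [/\ (forall x, ideal_pow m (Jideal n m sg rh) d x ->
         tens_ideal (ideal_pow m (aug_VP m e nu) d) (Omega m iv nu s x)),
      (forall y, tens_ideal (ideal_pow m (aug_VP m e nu) d) y ->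
         exists x, ideal_pow m (Jideal n m sg rh) d x /\ fs (Omega m iv nu s x) = fs y) &
      (forall x x', fs (Omega m iv nu s x) = fs (Omega m iv nu s x') -> fs x = fs x')].
Proof.
move=> Ggrp [_ gen _] nuM nuE sM sE d _.
have nusK := nu_sK nuM nuE sM sE.
have IJ := aug_sub_Jideal Ggrp gen nuM nuE sM sE.
split.
- by move=> x /(Jpow_sub_aug_ext Ggrp nuM nuE) /(Omega_aug_ext Ggrp nuM nusK).
- apply: (Omega_onto Ggrp nuM nusK) => a w /(ideal_pow_mono IJ).
  exact: (ideal_pow_mulr (group_mulA Ggrp) (Jideal_mulr Ggrp w)).
- exact: Omega_inj Ggrp.
Qed.
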